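(* In the one-dimensional perturbed elephant random walk with stops, suppose $\epsilon+r\neq1$ and $\gamma=\frac{1-\epsilon r}{2}$. Then for all $t\ge1$ $$\mathbb{E}[X_t^2]=\frac{t}{r(\epsilon+r)}-\frac{r\,\Gamma(t+1-\epsilon-r)}{(\epsilon+r)(\epsilon+r-\epsilon r)\Gamma(1-\epsilon-r)\Gamma(t)}-\frac{1}{\Gamma(1-\epsilon r)}\Big[\frac{1}{r(\epsilon+r)}-\frac{r}{(\epsilon+r)(\epsilon+r-\epsilon r)}\Big]\frac{\Gamma(t+1-\epsilon r)}{\Gamma(t)},$$ and hence $\displaystyle\lim_{t\to\infty}\frac{\mathbb{E}[X_t^2]}{t}=\frac{1}{r(\epsilon+r)}$.
   Context: One-dimensional perturbed elephant random walk with stops (perturbed ERWS): fix $p,q,r\in(0,1)$ with $p+q+r=1$, $\epsilon\in(0,1)$ and $s\in(0,1)$, and set $\gamma=p-q$. The steps $\sigma_1,\sigma_2,\dots$ take values in $\{-1,0,1\}$, $X_0=0$ and $X_t=\sigma_1+\dots+\sigma_t$. The first step satisfies $P(\sigma_1=1)=s$, $P(\sigma_1=-1)=1-s$. For $t\ge1$, conditionally on $\sigma_1,\dots,\sigma_t$, an index $k\in\{1,\dots,t\}$ is chosen uniformly at random. If $\sigma_k=\pm1$, then $\sigma_{t+1}=\sigma_k$ with probability $p$, $\sigma_{t+1}=-\sigma_k$ with probability $q$, and $\sigma_{t+1}=0$ with probability $r$. If $\sigma_k=0$, then $\sigma_{t+1}=1$ with probability $\epsilon/2$, $\sigma_{t+1}=-1$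 with probability $\epsilon/2$, and $\sigma_{t+1}=0$ with probability $1-\epsilon$. *)

From Stdlib Require Import Reals Lra List ZArith.
Open Scope R_scope.

(* A path of steps is stored MOST RECENT FIRST: [sigma_t; ...; sigma_1]. *)

(* transition kernel: probability that sigma_{t+1} = v given the
   remembered step sigma_k = a *)
Definition trans (p q r eps : R) (a v : Z) : R :=
  if Z.eqb a 0 then
    (if Z.eqb v 0 then 1 - eps
     else if Z.eqb v 1 then eps / 2
     else if Z.eqb v (-1) then eps / 2 else 0)
  else
    (if Z.eqb v a then p
     else if Z.eqb v (- a) then q
     else if Z.eqb v 0 then r else 0).

(* conditional probability of the next step v given the history h
   (h = [sigma_t; ...; sigma_1]); uniform choice of k in {1..t}. *)
Definition step_prob (p q r eps s : R) (h : list Z) (v : Z) : R :=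
  match h with
  | nil => if Z.eqb v 1 then s else if Z.eqb v (-1) then 1 - s else 0
  | _ => / INR (length h) *
         fold_right Rplus 0 (map (fun a => trans p q r eps a v) h)
  end.

Fixpoint path_prob (p q r eps s : R) (h : list Z) : R :=
  match h with
  | nil => 1
  | v :: h' => path_prob p q r eps s h' * step_prob p q r eps s h' v
  end.

Fixpoint paths (t : nat) : list (list Z) :=
  match t with
  | O => nil :: nil
  | S t' => flat_map (fun h => map (fun v => v :: h) ((-1)%Z :: 0%Z :: 1%Z :: nil))
                     (paths t')
  end.

Definition pos (h : list Z) : R := IZR (fold_right Z.add 0%Z h).

Definition second_moment (p q r eps s : R) (t : nat) : R :=
  fold_right Rplus 0
    (map (fun h => path_prob p q r eps s h * (pos h) ^ 2) (paths t)).

(* Gamma ratio  Gamma(t+1-a) / (Gamma(1-a) * Gamma(t))  for t >= 1, written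
   via the functional equation Gamma(x+1) = x Gamma(x):
   = (1-a)(2-a)...(t-a) / (t-1)!   (a not making 1-a a pole). *)
Fixpoint rising (a : R) (t : nat) : R :=
  match t with
  | O => 1
  | S t' => rising a t' * (INR t - a)
  end.

Definition gamma_ratio (a : R) (t : nat) : R :=
  rising a t / INR (fact (pred t)).

From Pilot Require Import Defs.
From Stdlib Require Import Reals Lra Lia List ZArith.
Open Scope R_scope.

(* Given the history h of length t >= 1, the next step has conditional mean
   (p - q) X_t / t and conditional second moment ((p + q) N_t + eps (t - N_t)) / t,
   where N_t counts the non-zero steps of h.  Hence E[N_t] and E[X_t^2] obey
   first-order linear recurrences with coefficients of the form 1 + a / t, which
   are solved by Gamma ratios; for gamma = (1 - eps r) / 2 the explicit solution
   is the stated formula.  Finally Gamma(t+1-c) / (Gamma(1-c) Gamma(t+1)) is the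
   product of the factors 1 - c/k for k <= t, which is O(t^-c), so the Gamma
   terms are o(t). *)

Definition sum_list {A : Type} (l : list A) (f : A -> R) : R :=
  fold_right Rplus 0 (map f l).

Lemma sum_list_nil {A : Type} (f : A -> R) : sum_list nil f = 0.
Proof. reflexivity. Qed.

Lemma sum_list_cons {A : Type} a (l : list A) f : sum_list (a :: l) f = f a + sum_list l f.
Proof. reflexivity. Qed.

Lemma sum_list_app {A : Type} (l1 l2 : list A) f :
  sum_list (l1 ++ l2) f = sum_list l1 f + sum_list l2 f.
Proof. unfold sum_list; induction l1 as [|a l1 IH]; cbn; [ring|]. rewrite IH; ring. Qed.

Lemma sum_list_flat_map {A B : Type} (l : list A) (F : A -> list B) f :
  sum_list (flat_map F l) f = sum_list l (fun a => sum_list (F a) f).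
Proof.
  induction l as [|a l IH]; [reflexivity|].
  cbn [flat_map]. now rewrite sum_list_app, IH, sum_list_cons.
Qed.

Lemma sum_list_map {A B : Type} (l : list A) (g : A -> B) f :
  sum_list (map g l) f = sum_list l (fun a => f (g a)).
Proof. unfold sum_list. now rewrite map_map. Qed.

Lemma sum_list_ext_in {A : Type} (l : list A) f g :
  (forall a, In a l -> f a = g a) -> sum_list l f = sum_list l g.
Proof. intros Hfg. unfold sum_list. f_equal. now apply map_ext_in. Qed.

Lemma sum_list_add {A : Type} (l : list A) f g :
  sum_list l (fun a => f a + g a) = sum_list l f + sum_list l g.
Proof. unfold sum_list; induction l as [|a l IH]; cbn; [ring|]. rewrite IH; ring. Qed.

Lemma sum_list_scal_l {A : Type} (l : list A) c f :
  sum_list l (fun a => c * f a) = c * sum_list l f.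
Proof. unfold sum_list; induction l as [|a l IH]; cbn; [ring|]. rewrite IH; ring. Qed.

Lemma sum_list_const {A : Type} (l : list A) c : sum_list l (fun _ => c) = c * INR (length l).
Proof.
  unfold sum_list; induction l as [|a l IH]; cbn -[INR]; [cbn; ring|].
  rewrite IH, S_INR; ring.
Qed.

Lemma sum_list_comm {A B : Type} (l1 : list A) (l2 : list B) F :
  sum_list l1 (fun a => sum_list l2 (F a))
  = sum_list l2 (fun b => sum_list l1 (fun a => F a b)).
Proof.
  induction l1 as [|a l1 IH].
  - rewrite sum_list_nil, (sum_list_ext_in l2 _ (fun _ => 0)) by reflexivity.
    rewrite sum_list_const; ring.
  - rewrite sum_list_cons, IH, <- sum_list_add. reflexivity.
Qed.

Definition steps : list Z := ((-1)%Z :: 0%Z :: 1%Z :: nil).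

Lemma paths_succ t :
  paths (S t) = flat_map (fun h => map (fun v => v :: h) steps) (paths t).
Proof. reflexivity. Qed.

Lemma in_paths t h : In h (paths t) -> length h = t /\ Forall (fun a => In a steps) h.
Proof.
  revert h; induction t as [|t IH]; intros h Hh.
  - destruct Hh as [<-|[]]. split; constructor.
  - rewrite paths_succ in Hh. apply in_flat_map in Hh as [h' [Hh' Hv]].
    apply in_map_iff in Hv as [v [<- Hv]]. destruct (IH h' Hh') as [Hlen Hsteps].
    split; [cbn; congruence | now constructor].
Qed.

(* Steps lie in {-1, 0, 1}, so this counts the non-zero steps of h. *)
Definition moves (h : list Z) : R := sum_list h (fun a => IZR a ^ 2).

Lemma moves_cons v h : moves (v :: h) = IZR v ^ 2 + moves h.
Proof. reflexivity. Qed.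

Lemma pos_cons v h : Defs.pos (v :: h) = IZR v + Defs.pos h.
Proof. apply plus_IZR. Qed.

Lemma pos_sum_list h : Defs.pos h = sum_list h IZR.
Proof.
  induction h as [|a h IH]; [reflexivity|].
  now rewrite pos_cons, IH, sum_list_cons.
Qed.

Section Moments.
Variables p q r eps s : R.
Hypothesis hsum : p + q + r = 1.

Definition expect (t : nat) (f : list Z -> R) : R :=
  sum_list (paths t) (fun h => path_prob p q r eps s h * f h).

Definition cond_expect (h : list Z) (g : Z -> R) : R :=
  sum_list steps (fun v => step_prob p q r eps s h v * g v).

Definition kernel_expect (a : Z) (g : Z -> R) : R :=
  sum_list steps (fun v => trans p q r eps a v * g v).

Lemma expect_succ t g :
  expect (S t) g = expect t (fun h => cond_expect h (fun v => g (v :: h))).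
Proof.
  unfold expect, cond_expect. rewrite paths_succ, sum_list_flat_map.
  apply sum_list_ext_in; intros h _.
  rewrite sum_list_map, <- sum_list_scal_l. apply sum_list_ext_in; intros v _.
  cbn [path_prob]. ring.
Qed.

Lemma expect_ext t f g :
  (forall h, In h (paths t) -> f h = g h) -> expect t f = expect t g.
Proof. intros Hfg. apply sum_list_ext_in; intros h Hh. now rewrite Hfg. Qed.

Lemma cond_expect_kernel h g : h <> nil ->
  cond_expect h g = / INR (length h) * sum_list h (fun a => kernel_expect a g).
Proof.
  destruct h as [|b h]; [easy|]; intros _.
  unfold cond_expect, kernel_expect.
  rewrite sum_list_comm, <- sum_list_scal_l. apply sum_list_ext_in; intros v _.
  change (step_prob p q r eps s (b :: h) v)
    with (/ INR (length (b :: h)) * sum_list (b :: h) (fun a => trans p q r eps a v)).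
  rewrite Rmult_assoc, Rmult_comm with (r2 := g v), <- sum_list_scal_l.
  f_equal. apply sum_list_ext_in; intros; ring.
Qed.

Lemma kernel_expect_quadratic a x y z : In a steps ->
  kernel_expect a (fun v => x + y * IZR v + z * IZR v ^ 2)
  = x + y * (p - q) * IZR a + z * ((p + q) * IZR a ^ 2 + eps * (1 - IZR a ^ 2)).
Proof.
  intros [<-|[<-|[<-|[]]]]; unfold kernel_expect, trans; cbn;
    replace r with (1 - p - q) by lra; field.
Qed.

Lemma cond_expect_quadratic h x y z : h <> nil -> Forall (fun a => In a steps) h ->
  cond_expect h (fun v => x + y * IZR v + z * IZR v ^ 2)
  = x + y * (p - q) * Defs.pos h / INR (length h)
      + z * ((p + q) * moves h + eps * (INR (length h) - moves h)) / INR (length h).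
Proof.
  intros Hh Hsteps. rewrite Forall_forall in Hsteps.
  assert (Hlen : INR (length h) <> 0)
    by (apply not_0_INR; destruct h; [easy | discriminate]).
  rewrite cond_expect_kernel by exact Hh.
  rewrite (sum_list_ext_in h _ (fun a => (x + z * eps)
            + ((y * (p - q)) * IZR a + (z * (p + q - eps)) * IZR a ^ 2))).
  - rewrite !sum_list_add, !sum_list_scal_l, !sum_list_const, pos_sum_list.
    unfold moves. field. exact Hlen.
  - intros a Ha. rewrite kernel_expect_quadratic by auto. ring.
Qed.

Lemma cond_expect_on_paths t h x y z : (1 <= t)%nat -> In h (paths t) ->
  cond_expect h (fun v => x + y * IZR v + z * IZR v ^ 2)
  = x + y * (p - q) * Defs.pos h / INR t
      + z * ((p + q) * moves h + eps * (INR t - moves h)) / INR t.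
Proof.
  intros Ht Hh. destruct (in_paths t h Hh) as [Hlen Hsteps].
  rewrite cond_expect_quadratic, Hlen by (auto; intros ->; cbn in Hlen; lia).
  reflexivity.
Qed.

Lemma expect_one t : expect t (fun _ => 1) = 1.
Proof.
  induction t as [|t IH]; [unfold expect, sum_list; cbn; ring|].
  rewrite expect_succ. destruct t as [|t].
  - unfold expect, cond_expect, step_prob, sum_list; cbn. ring.
  - transitivity (expect (S t) (fun _ => 1)); [|exact IH].
    apply expect_ext; intros h Hh.
    transitivity (cond_expect h (fun v => 1 + 0 * IZR v + 0 * IZR v ^ 2)).
    + unfold cond_expect. apply sum_list_ext_in; intros; ring.
    + rewrite (cond_expect_on_paths (S t)) by (auto; lia). unfold Rdiv; ring.
Qed.

Lemma expect_affine t c0 c1 c2 f g :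
  expect t (fun h => c0 + c1 * f h + c2 * g h)
  = c0 + c1 * expect t f + c2 * expect t g.
Proof.
  transitivity (c0 * expect t (fun _ => 1) + c1 * expect t f + c2 * expect t g).
  - unfold expect. rewrite <- !sum_list_scal_l, <- !sum_list_add.
    apply sum_list_ext_in; intros; ring.
  - now rewrite expect_one, Rmult_1_r.
Qed.

Lemma expect_moves_succ t : (1 <= t)%nat ->
  expect (S t) moves = eps + (1 + (p + q - eps) / INR t) * expect t moves.
Proof.
  intros Ht. assert (Ht0 : INR t <> 0) by (apply not_0_INR; lia).
  rewrite expect_succ.
  rewrite (expect_ext t _ (fun h => eps + 0 * moves h + (1 + (p + q - eps) / INR t) * moves h)).
  - rewrite expect_affine. ring.
  - intros h Hh.
    transitivity (cond_expect h (fun v => moves h + 0 * IZR v + 1 * IZR v ^ 2)).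
    + unfold cond_expect. apply sum_list_ext_in; intros v _.
      rewrite moves_cons; ring.
    + rewrite (cond_expect_on_paths t) by auto. field. exact Ht0.
Qed.

Lemma expect_pos_sq_succ t : (1 <= t)%nat ->
  expect (S t) (fun h => Defs.pos h ^ 2)
  = eps + (1 + 2 * (p - q) / INR t) * expect t (fun h => Defs.pos h ^ 2)
      + (p + q - eps) / INR t * expect t moves.
Proof.
  intros Ht. assert (Ht0 : INR t <> 0) by (apply not_0_INR; lia).
  rewrite expect_succ.
  rewrite (expect_ext t _ (fun h => eps + (1 + 2 * (p - q) / INR t) * Defs.pos h ^ 2
                                    + (p + q - eps) / INR t * moves h)).
  - rewrite expect_affine. ring.
  - intros h Hh.
    transitivity (cond_expect h (fun v => Defs.pos h ^ 2 + 2 * Defs.pos h * IZR v + 1 * IZR v ^ 2)).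
    + unfold cond_expect. apply sum_list_ext_in; intros v _.
      rewrite pos_cons; ring.
    + rewrite (cond_expect_on_paths t) by auto. field. exact Ht0.
Qed.

Lemma expect_moves_one : expect 1 moves = 1.
Proof. unfold expect, moves, step_prob, sum_list; cbn. ring. Qed.

Lemma expect_pos_sq_one : expect 1 (fun h => Defs.pos h ^ 2) = 1.
Proof. unfold expect, Defs.pos, step_prob, sum_list; cbn. ring. Qed.
End Moments.

Lemma gamma_ratio_one c : gamma_ratio c 1 = 1 - c.
Proof. unfold gamma_ratio; cbn. field. Qed.

Lemma gamma_ratio_succ c t : (1 <= t)%nat ->
  gamma_ratio c (S t) = gamma_ratio c t * (INR (S t) - c) / INR t.
Proof.
  intros Ht. destruct t as [|t]; [lia|]. unfold gamma_ratio.
  change (rising c (S (S t))) with (rising c (S t) * (INR (S (S t)) - c)).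
  cbn [pred]. change (fact (S t)) with (S t * fact t)%nat. rewrite mult_INR.
  field. split; [apply INR_fact_neq_0 | apply not_0_INR; lia].
Qed.

Fixpoint prod_1_sub_div (c : R) (t : nat) : R :=
  match t with
  | O => 1
  | S t' => prod_1_sub_div c t' * (1 - c / INR t)
  end.

Lemma gamma_ratio_prod c t : (1 <= t)%nat -> gamma_ratio c t = INR t * prod_1_sub_div c t.
Proof.
  intros Ht. induction Ht as [|t Ht IH].
  - rewrite gamma_ratio_one. cbn. field.
  - assert (INR t <> 0) by (apply not_0_INR; lia).
    assert (INR (S t) <> 0) by (apply not_0_INR; lia).
    rewrite gamma_ratio_succ, IH by exact Ht. cbn [prod_1_sub_div]. field. auto.
Qed.

Section ClosedForm.
Variables p q r eps s : R.
Hypotheses (hr : 0 < r < 1) (heps : 0 < eps < 1) (hsum : p + q + r = 1)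
  (hne : eps + r <> 1).

Lemma expect_moves_closed_form t : (1 <= t)%nat ->
  expect p q r eps s t moves
  = eps * INR t / (eps + r)
    + r / ((eps + r) * (1 - (eps + r))) * gamma_ratio (eps + r) t.
Proof.
  intros Ht. induction Ht as [|t Ht IH].
  - rewrite expect_moves_one, gamma_ratio_one. cbn. field. lra.
  - rewrite expect_moves_succ, IH, gamma_ratio_succ by auto.
    replace (p + q) with (1 - r) by lra. rewrite (S_INR t).
    field. repeat split; try lra. apply not_0_INR; lia.
Qed.

Hypothesis hgamma : p - q = (1 - eps * r) / 2.

Lemma second_moment_closed_form t : (1 <= t)%nat ->
  second_moment p q r eps s t =
    INR t / (r * (eps + r))
    - r / ((eps + r) * (eps + r - eps * r)) * gamma_ratio (eps + r) t
    - (1 / (r * (eps + r)) - r / ((eps + r) * (eps + r - eps * r)))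
      * gamma_ratio (eps * r) t.
Proof.
  assert (Hden : eps + r - eps * r <> 0) by nra.
  intros Ht.
  change (second_moment p q r eps s t) with (expect p q r eps s t (fun h => Defs.pos h ^ 2)).
  induction Ht as [|t Ht IH].
  - rewrite expect_pos_sq_one, !gamma_ratio_one. cbn. field. lra.
  - rewrite expect_pos_sq_succ, IH, expect_moves_closed_form, !gamma_ratio_succ by auto.
    replace (p + q) with (1 - r) by lra. rewrite hgamma, (S_INR t).
    field. repeat split; try lra. apply not_0_INR; lia.
Qed.

(* At t = 0 both sides vanish. *)
Lemma second_moment_div_INR t :
  second_moment p q r eps s t / INR t
  = 1 / (r * (eps + r))
    - r / ((eps + r) * (eps + r - eps * r)) * prod_1_sub_div (eps + r) t
    - (1 / (r * (eps + r)) - r / ((eps + r) * (eps + r - eps * r)))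
      * prod_1_sub_div (eps * r) t.
Proof.
  destruct t as [|t].
  - unfold second_moment, Defs.pos. cbn. unfold Rdiv. ring.
  - rewrite second_moment_closed_form, !(gamma_ratio_prod _ (S t)) by lia.
    field. repeat split; try nra. apply not_0_INR; lia.
Qed.
End ClosedForm.

Lemma Un_cv_const k : Un_cv (fun _ => k) k.
Proof. intros e He. exists O. intros n _. unfold Rdist. rewrite Rminus_diag, Rabs_R0. exact He. Qed.

Lemma Un_cv_sub_null_terms a b d u v : Un_cv u 0 -> Un_cv v 0 ->
  Un_cv (fun n => a - b * u n - d * v n) a.
Proof.
  intros Hu Hv.
  pose proof (CV_minus _ _ _ _ (CV_minus _ _ _ _ (Un_cv_const a) (CV_mult _ _ _ _ (Un_cv_const b) Hu))
                (CV_mult _ _ _ _ (Un_cv_const d) Hv)) as H.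
  rewrite !Rmult_0_r, !Rminus_0_r in H. exact H.
Qed.

Lemma exp_le x y : x <= y -> exp x <= exp y.
Proof. intros [Hxy|<-]; [left; now apply exp_increasing | lra]. Qed.

Lemma ln_le_sub_1 y : 0 < y -> ln y <= y - 1.
Proof. intros Hy. pose proof (exp_ineq1_le (ln y)). rewrite exp_ln in * by exact Hy. lra. Qed.

Lemma one_sub_div_mul_Rpower_le c m : 0 <= c -> 0 < m ->
  (1 - c / m) * Rpower (1 + / m) c <= 1.
Proof.
  intros Hc Hm. assert (Hinv : 0 < / m) by now apply Rinv_0_lt_compat.
  assert (Hlow : 1 - c / m <= exp (- (c / m))) by apply exp_ineq1_le.
  assert (Hup : Rpower (1 + / m) c <= exp (c / m)).
  { unfold Rpower, Rdiv. apply exp_le, Rmult_le_compat_l; [exact Hc|].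
    pose proof (ln_le_sub_1 (1 + / m)). lra. }
  assert (Hinverse : exp (- (c / m)) * exp (c / m) = 1)
    by (rewrite <- exp_plus, Rplus_opp_l; apply exp_0).
  pose proof (exp_pos (- (c / m))). pose proof (exp_pos (c * ln (1 + / m))).
  unfold Rpower in *. nra.
Qed.

Section ProdDecay.
Variables c : R.
Hypothesis hc : 0 < c.

Definition weighted_prod (n : nat) : R :=
  Rabs (prod_1_sub_div c n) * Rpower (INR n + 1) c.

Lemma weighted_prod_succ_le n : c <= INR (S n) ->
  weighted_prod (S n) <= weighted_prod n.
Proof.
  intros Hn. unfold weighted_prod. cbn [prod_1_sub_div].
  set (m := INR (S n)) in *. assert (Hm : 0 < m) by lra.
  assert (Hsplit : m + 1 = m * (1 + / m)) by (field; lra).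
  assert (Hfac : 0 <= 1 - c / m).
  { assert (Hle : c / m <= m / m)
      by (apply Rmult_le_compat_r; [left; now apply Rinv_0_lt_compat | exact Hn]).
    unfold Rdiv at 2 in Hle. rewrite Rinv_r in Hle by lra. lra. }
  rewrite Hsplit, <- Rpower_mult_distr by (try lra; pose proof (Rinv_0_lt_compat m Hm); lra).
  rewrite Rabs_mult, (Rabs_pos_eq _ Hfac).
  replace (INR n + 1) with m by (unfold m; rewrite S_INR; ring).
  pose proof (one_sub_div_mul_Rpower_le c m (Rlt_le _ _ hc) Hm) as Hstep.
  assert (Hw : 0 <= Rabs (prod_1_sub_div c n) * Rpower m c)
    by (apply Rmult_le_pos; [apply Rabs_pos | left; apply exp_pos]).
  replace (_ * _ * (Rpower m c * Rpower (1 + / m) c))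
    with (Rabs (prod_1_sub_div c n) * Rpower m c * ((1 - c / m) * Rpower (1 + / m) c))
    by ring.
  rewrite <- (Rmult_1_r (_ * Rpower m c)) at 2.
  now apply Rmult_le_compat_l.
Qed.

Lemma weighted_prod_le K n : c <= INR K -> (K <= n)%nat ->
  weighted_prod n <= weighted_prod K.
Proof.
  intros HK Hn. induction Hn as [|n Hn IH]; [lra|].
  apply Rle_trans with (weighted_prod n); [|exact IH].
  apply weighted_prod_succ_le. rewrite S_INR.
  pose proof (le_INR _ _ Hn). lra.
Qed.

Lemma Rpower_succ_cv_infty : cv_infty (fun n => Rpower (INR n + 1) c).
Proof.
  intros M. assert (HM' : 0 < Rmax M 1) by (pose proof (Rmax_r M 1); lra).
  set (M' := Rmax M 1) in *.
  destruct (INR_unbounded (Rpower M' (/ c))) as [N HN].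
  exists N. intros n Hn.
  apply Rle_lt_trans with M'; [apply Rmax_l|].
  replace M' with (Rpower (Rpower M' (/ c)) c) at 1
    by (rewrite Rpower_mult, Rinv_l, Rpower_1 by lra; reflexivity).
  apply Rlt_Rpower_l; [exact hc|]. split; [apply exp_pos|].
  pose proof (le_INR _ _ Hn). lra.
Qed.

Lemma prod_1_sub_div_cv0 : Un_cv (prod_1_sub_div c) 0.
Proof.
  destruct (INR_unbounded c) as [K HK].
  assert (Hdecay : Un_cv (fun n => weighted_prod K * / Rpower (INR n + 1) c) 0).
  { rewrite <- (Rmult_0_r (weighted_prod K)).
    apply CV_mult; [apply Un_cv_const|].
    apply cv_infty_cv_0, Rpower_succ_cv_infty. }
  intros e He. destruct (Hdecay e He) as [N HN]. exists (max N K). intros n Hn.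
  apply Rle_lt_trans with (weighted_prod K * / Rpower (INR n + 1) c).
  - unfold Rdist. rewrite Rminus_0_r.
    assert (Hpow : 0 < Rpower (INR n + 1) c) by apply exp_pos.
    apply (Rmult_le_reg_r (Rpower (INR n + 1) c)); [exact Hpow|].
    rewrite Rmult_assoc, Rinv_l by lra. rewrite Rmult_1_r.
    apply weighted_prod_le; [lra | lia].
  - specialize (HN n ltac:(lia)). unfold Rdist in HN. rewrite Rminus_0_r in HN.
    eapply Rle_lt_trans; [apply RRle_abs | exact HN].
Qed.
End ProdDecay.

Theorem mainTheorem8 (p q r eps s : R)
  (hp : 0 < p < 1) (hq : 0 < q < 1) (hr : 0 < r < 1) (hsum : p + q + r = 1)
  (heps : 0 < eps < 1) (hs : 0 < s < 1)
  (hne : eps + r <> 1) (hgamma : p - q = (1 - eps * r) / 2) :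
  (forall t : nat, (1 <= t)%nat ->
     second_moment p q r eps s t =
       INR t / (r * (eps + r))
       - r / ((eps + r) * (eps + r - eps * r)) * gamma_ratio (eps + r) t
       - (1 / (r * (eps + r)) - r / ((eps + r) * (eps + r - eps * r)))
           * gamma_ratio (eps * r) t)
  /\ Un_cv (fun t => second_moment p q r eps s t / INR t) (1 / (r * (eps + r))).
Proof.
  split; [exact (second_moment_closed_form p q r eps s hr heps hsum hne hgamma)|].
  eapply Un_cv_ext;
    [intros t; symmetry; exact (second_moment_div_INR p q r eps s hr heps hsum hne hgamma t)|].
  apply Un_cv_sub_null_terms; apply prod_1_sub_div_cv0; nra.
Qed.
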